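(* Let $A$ be a semiprime associative algebra and $Q$ any subalgebra of $Q^l_{\max}(A)$ containing $A$. Then $A\subseteq Q$ is a dense extension.
   Context: Algebras over a commutative unital ring $\Phi$; $Q^l_{\max}(A)$ is the maximal left (Utumi) quotient algebra of $A$. For an algebra $Q$, $M(Q)$ is the subalgebra of $\mathrm{End}_\Phi(Q)$ generated by the identity and the left and right multiplication operators $\lambda_q(x)=qx$, $\rho_q(x)=xq$, $q\in Q$. An extension $A\subseteq Q$ is dense if the only $\mu\in M(Q)$ with $\mu(A)=0$ is $\mu=0$. *)

From HB Require Import structures.
From mathcomp Require Import all_boot all_algebra.
Set Implicit Arguments. Unset Strict Implicit. Unset Printing Implicit Defensive.
Import GRing.Theory.
Local Open Scope ring_scope.

(* Possibly non-unital associative algebras over a commutative unital ring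
   Phi are modelled as a Phi-module V with a Phi-bilinear associative
   product [mul]. *)

Section AlgDefs.
Variables (Phi : comPzRingType) (V : lmodType Phi) (mul : V -> V -> V).

Definition assoc_alg : Prop :=
  [/\ (forall x y z, mul x (mul y z) = mul (mul x y) z),
      (forall x y z, mul (x + y) z = mul x z + mul y z),
      (forall x y z, mul x (y + z) = mul x y + mul x z),
      (forall (c : Phi) x y, mul (c *: x) y = c *: mul x y) &
      (forall (c : Phi) x y, mul x (c *: y) = c *: mul x y)].

Definition subspace (S : V -> Prop) : Prop :=
  [/\ S 0, (forall x y, S x -> S y -> S (x + y)) &
      (forall (c : Phi) x, S x -> S (c *: x))].

Definition subalgebra (S : V -> Prop) : Prop :=
  subspace S /\ (forall x y, S x -> S y -> S (mul x y)).

Definition ideal_of (A I : V -> Prop) : Prop :=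
  [/\ (forall x, I x -> A x), subspace I,
      (forall a x, A a -> I x -> I (mul a x)) &
      (forall a x, A a -> I x -> I (mul x a))].

Definition semiprime (A : V -> Prop) : Prop :=
  forall I, ideal_of A I ->
    (forall x y, I x -> I y -> mul x y = 0) -> forall x, I x -> x = 0.

Definition dense_left_ideal (A I : V -> Prop) : Prop :=
  [/\ (forall x, I x -> A x), subspace I,
      (forall a x, A a -> I x -> I (mul a x)) &
      (forall p q, A p -> A q -> p <> 0 ->
         exists a, [/\ A a, mul a p <> 0 & I (mul a q)])].

(* The whole algebra V is the maximal left quotient algebra Q^l_max(A) of its
   subalgebra A, via Utumi's characterization:
   (i) every q has a dense left ideal I of A with I q <= A;
   (ii) I q = 0 with I dense forces q = 0;
   (iii) every left A-module map f : I -> A (I dense) is right multiplication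
         by some q. *)
Definition is_max_left_quotient (A : V -> Prop) : Prop :=
  [/\ (forall q, exists I, dense_left_ideal A I /\ forall x, I x -> A (mul x q)),
      (forall I q, dense_left_ideal A I ->
          (forall x, I x -> mul x q = 0) -> q = 0) &
      (forall I (f : V -> V), dense_left_ideal A I ->
          (forall x, I x -> A (f x)) ->
          (forall x y, I x -> I y -> f (x + y) = f x + f y) ->
          (forall (c : Phi) x, I x -> f (c *: x) = c *: f x) ->
          (forall a x, A a -> I x -> f (mul a x) = mul a (f x)) ->
          exists q, forall x, I x -> f x = mul x q)].

(* Operators generating the multiplication algebra M(Q): the subalgebra of
   End_Phi generated by the identity and the maps lambda_q, rho_q, q in Q.
   They are represented as maps on the ambient V; since they preserve Q,
   their restrictions to Q are exactly the elements of M(Q). *)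
Inductive mult_op (Q : V -> Prop) : (V -> V) -> Prop :=
  | mo_id : mult_op Q id
  | mo_L q : Q q -> mult_op Q (mul q)
  | mo_R q : Q q -> mult_op Q (fun x => mul x q)
  | mo_add f g : mult_op Q f -> mult_op Q g -> mult_op Q (fun x => f x + g x)
  | mo_scale (c : Phi) f : mult_op Q f -> mult_op Q (fun x => c *: f x)
  | mo_comp f g : mult_op Q f -> mult_op Q g -> mult_op Q (fun x => f (g x)).

Definition dense_extension (A Q : V -> Prop) : Prop :=
  forall mu, mult_op Q mu -> (forall a, A a -> mu a = 0) ->
    forall x, Q x -> mu x = 0.

End AlgDefs.

(* Every operator of M(Q) is a finite sum of maps y |-> o (r y), with o a left
   multiplication or the identity and r a composite of right multiplications.
   Multiplying on the left by an l from a common dense left ideal of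
   denominators, mu(A) = 0 becomes a linear identity sum_i c_i r_i(y) = 0 on A
   with coefficients c_i in A; it suffices to show that such an identity holds
   at every x of Q_max.  By induction on the number of terms, the leading
   coefficients of the identities of length n+1 form an ideal D of A, and
   sending a leading coefficient to the value of its identity at x is, by the
   induction hypothesis, a well-defined left A-module map on D.  Extended by zero to D + l.ann(D),
   which is a dense left ideal because A is semiprime, it is right
   multiplication by some w in Q_max; and w = 0, since the identity vanishes
   at s x for s in a dense left ideal with s x in A. *)

From mathcomp Require Import all_boot all_algebra.
From Stdlib Require Import Classical ClassicalEpsilon.
Set Implicit Arguments. Unset Strict Implicit. Unset Printing Implicit Defensive.
Import GRing.Theory.
Local Open Scope ring_scope.

Section MultiplicationAlgebra.
Variables (Phi : comPzRingType) (V : lmodType Phi) (mul : V -> V -> V).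
Implicit Types (S T A D E I J : V -> Prop) (x y : V).

Lemma subspace0 S : subspace S -> S 0.
Proof. by case. Qed.

Lemma subspaceD S x y : subspace S -> S x -> S y -> S (x + y).
Proof. by case=> _ hD _; apply: hD. Qed.

Lemma subspaceZ S (c : Phi) x : subspace S -> S x -> S (c *: x).
Proof. by case=> _ _ hZ; apply: hZ. Qed.

Lemma subspaceN S x : subspace S -> S x -> S (- x).
Proof. by move=> hS /(subspaceZ (-1) hS); rewrite scaleN1r. Qed.

Lemma subspaceB S x y : subspace S -> S x -> S y -> S (x - y).
Proof. by move=> hS hx /(subspaceN hS); apply: subspaceD. Qed.

Lemma subspaceI S T : subspace S -> subspace T -> subspace (fun x => S x /\ T x).
Proof.
move=> hS hT; split=> [|x y [] ? ? [] ? ?|c x [] ? ?]; split;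
  by [apply: subspace0 | apply: subspaceD | apply: subspaceZ].
Qed.

Lemma subalgebra_subspace A : subalgebra mul A -> subspace A.
Proof. by case. Qed.

Lemma subalgebraM A x y : subalgebra mul A -> A x -> A y -> A (mul x y).
Proof. by case=> _ hM; apply: hM. Qed.

Lemma ideal_sub A I x : ideal_of mul A I -> I x -> A x.
Proof. by case=> hI _ _ _; apply: hI. Qed.

Lemma ideal_subspace A I : ideal_of mul A I -> subspace I.
Proof. by case. Qed.

Lemma idealMl A I a x : ideal_of mul A I -> A a -> I x -> I (mul a x).
Proof. by case=> _ _ hM _; apply: hM. Qed.

Lemma idealMr A I a x : ideal_of mul A I -> A a -> I x -> I (mul x a).
Proof. by case=> _ _ _ hM; apply: hM. Qed.

Lemma dense_sub A I x : dense_left_ideal mul A I -> I x -> A x.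
Proof. by case=> hI _ _ _; apply: hI. Qed.

Lemma dense_subspace A I : dense_left_ideal mul A I -> subspace I.
Proof. by case. Qed.

Lemma denseMl A I a x : dense_left_ideal mul A I -> A a -> I x -> I (mul a x).
Proof. by case=> _ _ hM _; apply: hM. Qed.

Lemma denseP A I p q : dense_left_ideal mul A I -> A p -> A q -> p <> 0 ->
  exists a, [/\ A a, mul a p <> 0 & I (mul a q)].
Proof. by case=> _ _ _ hP; apply: hP. Qed.

Hypothesis mul_assoc_alg : assoc_alg mul.

Lemma amulA x y z : mul x (mul y z) = mul (mul x y) z.
Proof. by case: mul_assoc_alg. Qed.

Lemma amulDl x y z : mul (x + y) z = mul x z + mul y z.
Proof. by case: mul_assoc_alg. Qed.

Lemma amulDr x y z : mul x (y + z) = mul x y + mul x z.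
Proof. by case: mul_assoc_alg. Qed.

Lemma amulZl (c : Phi) x y : mul (c *: x) y = c *: mul x y.
Proof. by case: mul_assoc_alg. Qed.

Lemma amulZr (c : Phi) x y : mul x (c *: y) = c *: mul x y.
Proof. by case: mul_assoc_alg. Qed.

Lemma amul0l y : mul 0 y = 0.
Proof. by have := amulZl 0 0 y; rewrite !scale0r. Qed.

Lemma amul0r x : mul x 0 = 0.
Proof. by have := amulZr 0 x 0; rewrite !scale0r. Qed.

Lemma amulNl x y : mul (- x) y = - mul x y.
Proof. by rewrite -scaleN1r amulZl scaleN1r. Qed.

Lemma amulBl x y z : mul (x - y) z = mul x z - mul y z.
Proof. by rewrite amulDl amulNl. Qed.

Lemma amulNr x y : mul x (- y) = - mul x y.
Proof. by rewrite -scaleN1r amulZr scaleN1r. Qed.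

Lemma amulBr x y z : mul x (y - z) = mul x y - mul x z.
Proof. by rewrite amulDr amulNr. Qed.

Lemma amul_sumr l (I : Type) (s : seq I) (F : I -> V) :
  mul l (\sum_(i <- s) F i) = \sum_(i <- s) mul l (F i).
Proof. exact: (big_morph (mul l) (amulDr l) (amul0r l)). Qed.

Definition is_lendo (f : V -> V) :=
  (forall y z, f (y + z) = f y + f z) /\ forall v y, f (mul v y) = mul v (f y).

Record lendo := Lendo { lendo_fun :> V -> V; lendoP : is_lendo lendo_fun }.

Lemma lendoD (r : lendo) y z : r (y + z) = r y + r z.
Proof. by case: (lendoP r). Qed.

Lemma lendo_mull (r : lendo) v y : r (mul v y) = mul v (r y).
Proof. by case: (lendoP r). Qed.

Lemma lendo0 (r : lendo) : r 0 = 0.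
Proof. by apply/(addrI (r 0)); rewrite -lendoD !addr0. Qed.

Lemma lendo_sum (r : lendo) (I : Type) (s : seq I) (F : I -> V) :
  r (\sum_(i <- s) F i) = \sum_(i <- s) r (F i).
Proof. exact: (big_morph r (lendoD r) (lendo0 r)). Qed.

Lemma id_is_lendo : is_lendo id.
Proof. by []. Qed.

Lemma rmul_is_lendo q : is_lendo (fun y => mul y q).
Proof. by split=> *; rewrite ?amulDl ?amulA. Qed.

Lemma scale_is_lendo (c : Phi) (r : lendo) : is_lendo (fun y => c *: r y).
Proof. by split=> *; rewrite ?lendoD ?scalerDr ?lendo_mull ?amulZr. Qed.

Lemma comp_is_lendo (r r' : lendo) : is_lendo (fun y => r (r' y)).
Proof. by split=> *; rewrite ?lendoD ?lendo_mull. Qed.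

(* [None] stands for the identity, as V need not have a unit. *)
Definition lmulo (o : option V) y := if o is Some a then mul a y else y.
Definition mulo l (o : option V) := if o is Some a then mul l a else l.
Definition omul (o o' : option V) := if o is Some a then Some (mulo a o') else o'.

Lemma lmuloZ o (c : Phi) y : lmulo o (c *: y) = c *: lmulo o y.
Proof. by case: o => [a|] //=; rewrite amulZr. Qed.

Lemma lmulo_sum o (I : Type) (s : seq I) (F : I -> V) :
  lmulo o (\sum_(i <- s) F i) = \sum_(i <- s) lmulo o (F i).
Proof. by case: o => [a|] //=; rewrite amul_sumr. Qed.

Lemma lmulo_omul o o' y : lmulo (omul o o') y = lmulo o (lmulo o' y).
Proof. by case: o => [a|]; case: o' => [b|] //=; rewrite amulA. Qed.

Lemma lendo_lmulo (r : lendo) o y : r (lmulo o y) = lmulo o (r y).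
Proof. by case: o => [a|] //=; rewrite lendo_mull. Qed.

Lemma mul_lmulo l o y : mul l (lmulo o y) = mul (mulo l o) y.
Proof. by case: o => [a|] //=; rewrite amulA. Qed.

Definition nf_eval (s : seq (option V * lendo)) y := \sum_(t <- s) lmulo t.1 (t.2 y).

Lemma mult_op_nf Q mu : mult_op mul Q mu -> exists s, forall y, mu y = nf_eval s y.
Proof.
elim=> {mu} [|q _|q _|f g _ [s1 e1] _ [s2 e2]|c f _ [s e]|f g _ [s1 e1] _ [s2 e2]].
- by exists [:: (None, Lendo id_is_lendo)] => y; rewrite /nf_eval big_seq1.
- by exists [:: (Some q, Lendo id_is_lendo)] => y; rewrite /nf_eval big_seq1.
- by exists [:: (None, Lendo (rmul_is_lendo q))] => y; rewrite /nf_eval big_seq1.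
- by exists (s1 ++ s2) => y; rewrite /nf_eval big_cat e1 e2.
- exists [seq (t.1, Lendo (scale_is_lendo c t.2)) | t <- s] => y.
  by rewrite /nf_eval big_map e scaler_sumr; apply: eq_bigr => t _; rewrite lmuloZ.
- exists [seq (omul t1.1 t2.1, Lendo (comp_is_lendo t1.2 t2.2)) | t1 <- s1, t2 <- s2] => y.
  rewrite /nf_eval big_allpairs_dep e2 e1; apply: eq_bigr => t1 _ /=.
  by rewrite lendo_sum lmulo_sum; apply: eq_bigr => t2 _; rewrite lendo_lmulo lmulo_omul.
Qed.

Section Subalgebra.
Variable A : V -> Prop.
Hypothesis A_subalg : subalgebra mul A.

Let A_subspace := subalgebra_subspace A_subalg.

Definition lann D a := A a /\ forall d, D d -> mul a d = 0.
Definition rann D a := A a /\ forall d, D d -> mul d a = 0.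
Definition sumset (S T : V -> Prop) w := exists s t, [/\ S s, T t & w = s + t].

Lemma idealI I J : ideal_of mul A I -> ideal_of mul A J ->
  ideal_of mul A (fun x => I x /\ J x).
Proof.
move=> hI hJ; split=> [x [/(ideal_sub hI)] //||a x ha [hIx hJx]|a x ha [hIx hJx]].
- exact: subspaceI (ideal_subspace hI) (ideal_subspace hJ).
- by split; [apply: (idealMl hI) | apply: (idealMl hJ)].
- by split; [apply: (idealMr hI) | apply: (idealMr hJ)].
Qed.

Lemma ideal_lann D : ideal_of mul A D -> ideal_of mul A (lann D).
Proof.
move=> hD; split=> [a [] //|||u a hu [ha had]].
- split=> [|a b [ha had] [hb hbd]|c a [ha had]].
  + by split=> [|d _]; [exact: subspace0 A_subspace | rewrite amul0l].
  + split=> [|d hd]; first exact: (subspaceD A_subspace ha hb).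
    by rewrite amulDl had // hbd // addr0.
  + split=> [|d hd]; first exact: (subspaceZ c A_subspace ha).
    by rewrite amulZl had // scaler0.
- move=> u a hu [ha had]; split=> [|d hd]; first exact: (subalgebraM A_subalg hu ha).
  by rewrite -amulA had // amul0r.
- split=> [|d hd]; first exact: (subalgebraM A_subalg ha hu).
  by rewrite -amulA had //; apply: (idealMl hD).
Qed.

Lemma ideal_rann D : ideal_of mul A D -> ideal_of mul A (rann D).
Proof.
move=> hD; split=> [a [] //||u a hu [ha hda]|u a hu [ha hda]].
- split=> [|a b [ha hda] [hb hdb]|c a [ha hda]].
  + by split=> [|d _]; [exact: subspace0 A_subspace | rewrite amul0r].
  + split=> [|d hd]; first exact: (subspaceD A_subspace ha hb).
    by rewrite amulDr hda // hdb // addr0.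
  + split=> [|d hd]; first exact: (subspaceZ c A_subspace ha).
    by rewrite amulZr hda // scaler0.
- split=> [|d hd]; first exact: (subalgebraM A_subalg hu ha).
  by rewrite amulA hda //; apply: (idealMr hD).
- split=> [|d hd]; first exact: (subalgebraM A_subalg ha hu).
  by rewrite amulA hda // amul0l.
Qed.

Lemma ideal_sumset I J : ideal_of mul A I -> ideal_of mul A J ->
  ideal_of mul A (sumset I J).
Proof.
move=> hI hJ; have sI := ideal_subspace hI; have sJ := ideal_subspace hJ.
split=> [_ [s [t [hs ht ->]]]||u _ hu [s [t [hs ht ->]]]|u _ hu [s [t [hs ht ->]]]].
- exact: (subspaceD A_subspace (ideal_sub hI hs) (ideal_sub hJ ht)).
- split=> [|_ _ [s [t [hs ht ->]]] [s' [t' [hs' ht' ->]]]|c _ [s [t [hs ht ->]]]].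
  + by exists 0, 0; rewrite addr0; split=> //; [exact: (subspace0 sI) | exact: (subspace0 sJ)].
  + by exists (s + s'), (t + t'); rewrite addrACA; split=> //;
      [exact: (subspaceD sI) | exact: (subspaceD sJ)].
  + by exists (c *: s), (c *: t); rewrite scalerDr; split=> //;
      [exact: (subspaceZ c sI) | exact: (subspaceZ c sJ)].
- by exists (mul u s), (mul u t); rewrite amulDr; split=> //;
    [exact: (idealMl hI) | exact: (idealMl hJ)].
- by exists (mul s u), (mul t u); rewrite amulDl; split=> //;
    [exact: (idealMr hI) | exact: (idealMr hJ)].
Qed.

Lemma ideal_dense E : ideal_of mul A E -> (forall p, rann E p -> p = 0) ->
  dense_left_ideal mul A E.
Proof.
move=> hE rannE0; split=> [x /(ideal_sub hE) //|||p q hp hq hp0].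
- exact: ideal_subspace hE.
- by move=> a x; apply: (idealMl hE).
have [[w [hw hwp]]|hno] := classic (exists w, E w /\ mul w p <> 0).
  by exists w; split=> //; [apply: (ideal_sub hE) | apply: (idealMr hE)].
exfalso; apply/hp0/rannE0; split=> // w hw.
by apply: NNPP => hwp; apply: hno; exists w.
Qed.

Lemma denseI I J : dense_left_ideal mul A I -> dense_left_ideal mul A J ->
  dense_left_ideal mul A (fun x => I x /\ J x).
Proof.
move=> dI dJ; split=> [x [/(dense_sub dI)] //||a x ha [hIx hJx]|p q hp hq hp0].
- exact: subspaceI (dense_subspace dI) (dense_subspace dJ).
- by split; [apply: (denseMl dI) | apply: (denseMl dJ)].
have [a1 [ha1 ha1p ha1q]] := denseP dI hp hq hp0.
have [a2 [ha2 ha2p ha2q]] := denseP dJ (subalgebraM A_subalg ha1 hp)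
  (subalgebraM A_subalg ha1 hq) ha1p.
exists (mul a2 a1); rewrite -!amulA; split=> //; first exact: (subalgebraM A_subalg ha2 ha1).
by split=> //; apply: (denseMl dI).
Qed.

Hypothesis A_semiprime : semiprime mul A.

Lemma semiprime_ideal_rann D y : ideal_of mul A D -> D y ->
  (forall d, D d -> mul d y = 0) -> y = 0.
Proof.
move=> hD hy hDy; apply: (A_semiprime (idealI hD (ideal_rann hD))).
- by move=> u v [hu _] [_ [_ hv]]; apply: hv.
- by split=> //; split=> //; apply: (ideal_sub hD).
Qed.

Lemma semiprime_ideal_lann D y : ideal_of mul A D -> D y ->
  (forall d, D d -> mul y d = 0) -> y = 0.
Proof.
move=> hD hy hyD; apply: (A_semiprime (idealI hD (ideal_lann hD))).
- by move=> u v [_ [_ hu]] [hv _]; apply: hu.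
- by split=> //; split=> //; apply: (ideal_sub hD).
Qed.

Lemma semiprime_rann_lann D p : ideal_of mul A D -> rann D p -> lann D p.
Proof.
move=> hD [hp hDp]; split=> // d hd.
apply: (semiprime_ideal_rann hD); first exact: (idealMl hD).
by move=> d' hd'; rewrite amulA hDp // amul0l.
Qed.

Lemma dense_sumset_lann D : ideal_of mul A D ->
  dense_left_ideal mul A (sumset D (lann D)).
Proof.
move=> hD; have hL := ideal_lann hD.
apply: ideal_dense => [|p [hp hEp]]; first exact: ideal_sumset.
have hDp : rann D p.
  split=> // d hd; apply: hEp; exists d, 0; rewrite addr0.
  by split=> //; apply: (subspace0 (ideal_subspace hL)).
apply: (semiprime_ideal_rann hL (semiprime_rann_lann hD hDp)) => a ha.
by apply: hEp; exists 0, a; rewrite add0r; split=> //; apply: (subspace0 (ideal_subspace hD)).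
Qed.

Definition left_module_map I (f : V -> V) :=
  [/\ forall x y, I x -> I y -> f (x + y) = f x + f y,
      forall (c : Phi) x, I x -> f (c *: x) = c *: f x &
      forall a x, A a -> I x -> f (mul a x) = mul a (f x)].

Lemma left_module_map0 I f : subspace I -> left_module_map I f -> f 0 = 0.
Proof.
move=> sI [fD _ _]; have := fD 0 0 (subspace0 sI) (subspace0 sI).
by rewrite addr0 => e; apply/(addrI (f 0)); rewrite addr0 -e.
Qed.

Hypothesis A_max : is_max_left_quotient mul A.

Lemma exists_dense_denominator q :
  exists I, dense_left_ideal mul A I /\ forall x, I x -> A (mul x q).
Proof. by case: A_max => hq _ _; apply: hq. Qed.

Lemma dense_rann0 I q : dense_left_ideal mul A I ->
  (forall x, I x -> mul x q = 0) -> q = 0.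
Proof. by case: A_max => _ hq _; apply: hq. Qed.

Lemma dense_exists_mul_neq0 I p : dense_left_ideal mul A I -> p <> 0 ->
  exists2 a, I a & mul a p <> 0.
Proof.
move=> dI hp; apply: NNPP => hno; apply/hp/(dense_rann0 dI) => a ha.
by apply: NNPP => hap; apply: hno; exists a.
Qed.

Lemma dense_common_denominator (s : seq V) : exists L,
  dense_left_ideal mul A L /\ forall l q, L l -> q \in s -> A (mul l q).
Proof.
elim: s => [|q s [L [dL hL]]].
  by have [I [dI _]] := exists_dense_denominator 0; exists I.
have [I [dI hI]] := exists_dense_denominator q.
exists (fun x => L x /\ I x); split=> [|l q' [hl hi]]; first exact: denseI.
by rewrite inE => /predU1P [-> | /(hL l q' hl)]; [apply: hI |].
Qed.

Lemma dense_map_preimage I f : dense_left_ideal mul A I -> left_module_map I f ->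
  dense_left_ideal mul A (fun x => I x /\ A (f x)).
Proof.
move=> dI fmod; have sI := dense_subspace dI; case: (fmod) => fD fZ fM.
split=> [x [/(dense_sub dI)] //||a x ha [hx hfx]|p q hp hq hp0].
- split=> [|x y [hx hfx] [hy hfy]|c x [hx hfx]]; split.
  + exact: (subspace0 sI).
  + by rewrite (left_module_map0 sI fmod); apply: (subspace0 A_subspace).
  + exact: (subspaceD sI hx hy).
  + by rewrite fD //; apply: (subspaceD A_subspace hfx hfy).
  + exact: (subspaceZ c sI hx).
  + by rewrite fZ //; apply: (subspaceZ c A_subspace hfx).
- by split; [apply: (denseMl dI) | rewrite fM //; apply: (subalgebraM A_subalg)].
have [a1 [ha1 ha1p ha1q]] := denseP dI hp hq hp0.
have [D [dD hD]] := exists_dense_denominator (f (mul a1 q)).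
have [a2 ha2 ha2p] := dense_exists_mul_neq0 dD ha1p.
have ha2A := dense_sub dD ha2.
exists (mul a2 a1); rewrite -!amulA; split=> //; first exact: (subalgebraM A_subalg ha2A ha1).
by split; [apply: (denseMl dI) | rewrite fM //; apply: hD].
Qed.

(* Utumi's condition (iii) only applies to maps with values in A, hence the
   detour through the dense left ideal of those x in I with f x in A. *)
Lemma dense_map_rmul I f : dense_left_ideal mul A I -> left_module_map I f ->
  exists q, forall x, I x -> f x = mul x q.
Proof.
move=> dI fmod; case: (fmod) => fD fZ fM; pose IA x := I x /\ A (f x).
have [q hq] : exists q, forall x, IA x -> f x = mul x q.
  case: A_max => _ _ ext; apply: (ext IA f (dense_map_preimage dI fmod)).
  - by move=> x [].
  - by move=> x y [hx _] [hy _]; apply: fD.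
  - by move=> c x [hx _]; apply: fZ.
  - by move=> a x ha [hx _]; apply: fM.
exists q => x hx; have [D [dD hD]] := exists_dense_denominator (f x).
apply/eqP; rewrite -subr_eq0; apply/eqP; apply: (dense_rann0 dD) => d hd.
have hdA := dense_sub dD hd.
have hdx : IA (mul d x) by split; [apply: (denseMl dI) | rewrite fM //; apply: hD].
by rewrite amulBr -fM // hq // amulA subrr.
Qed.

Lemma sumset_lann_direct D d d' a a' : ideal_of mul A D -> D d -> D d' ->
  lann D a -> lann D a' -> d + a = d' + a' -> d = d'.
Proof.
move=> hD hd hd' [_ ha] [_ ha'] e; apply/eqP; rewrite -subr_eq0; apply/eqP.
apply: (semiprime_ideal_lann hD (subspaceB (ideal_subspace hD) hd hd')) => d0 hd0.
have -> : d - d' = a' - a by apply/eqP; rewrite subr_eq addrAC [a' + d']addrC -e addrK.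
by rewrite amulBl ha' // ha // subrr.
Qed.

Lemma ideal_map_rmul D f : ideal_of mul A D -> left_module_map D f -> exists q,
  (forall d, D d -> f d = mul d q) /\ (forall a, lann D a -> mul a q = 0).
Proof.
move=> hD fmod; case: (fmod) => fD fZ fM; have hL := ideal_lann hD.
have sD := ideal_subspace hD; have sL := ideal_subspace hL.
pose decomp w d := exists a, [/\ D d, lann D a & w = d + a].
pose g w := f (epsilon (inhabits 0) (decomp w)).
have gE d a : D d -> lann D a -> g (d + a) = f d.
  move=> hd ha; have : sumset D (lann D) (d + a) by exists d, a.
  move=> /(epsilon_spec (inhabits 0) (decomp (d + a))) [a' [hd' ha' e]].
  by rewrite /g -(sumset_lann_direct hD hd hd' ha ha' e).
have gmod : left_module_map (sumset D (lann D)) g.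
  split=> [_ _ [d [a [hd ha ->]]] [d' [a' [hd' ha' ->]]]
          |c _ [d [a [hd ha ->]]]|u _ hu [d [a [hd ha ->]]]].
  - have hdd' := subspaceD sD hd hd'; have haa' := subspaceD sL ha ha'.
    by rewrite addrACA !gE // fD.
  - have hcd := subspaceZ c sD hd; have hca := subspaceZ c sL ha.
    by rewrite scalerDr !gE // fZ.
  - have hud := idealMl hD hu hd; have hua := idealMl hL hu ha.
    by rewrite amulDr !gE // fM.
have [q hq] := dense_map_rmul (dense_sumset_lann hD) gmod.
have h0D := subspace0 sD; have h0L := subspace0 sL.
exists q; split=> [d hd|a ha].
- by have := hq (d + 0); rewrite gE // addr0 => -> //; exists d, 0; rewrite addr0.
- have := hq (0 + a); rewrite gE // add0r (left_module_map0 sD fmod) => <- //.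
  by exists 0, a; rewrite add0r.
Qed.

Section LinearIdentity.
Variable r : nat -> V -> V.
Hypothesis r_mull : forall i v y, A v -> r i (mul v y) = mul v (r i y).

Definition lincomb n (c : nat -> V) y := \sum_(i < n) mul (c i) (r i y).

Definition A_identity n c :=
  (forall i, (i < n)%N -> A (c i)) /\ forall y, A y -> lincomb n c y = 0.

Lemma lincomb0 n y : lincomb n (fun=> 0) y = 0.
Proof. by apply: big1 => i _; rewrite amul0l. Qed.

Lemma lincombSr n c y : lincomb n.+1 c y = lincomb n c y + mul (c n) (r n y).
Proof. exact: big_ord_recr. Qed.

Lemma lincombD n c c' y :
  lincomb n (fun i => c i + c' i) y = lincomb n c y + lincomb n c' y.
Proof. by rewrite -big_split; apply: eq_bigr => i _; rewrite amulDl. Qed.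

Lemma lincombZ n k c y : lincomb n (fun i => k *: c i) y = k *: lincomb n c y.
Proof. by rewrite scaler_sumr; apply: eq_bigr => i _; rewrite amulZl. Qed.

Lemma lincombB n c c' y :
  lincomb n (fun i => c i - c' i) y = lincomb n c y - lincomb n c' y.
Proof. by rewrite -sumrB; apply: eq_bigr => i _; rewrite amulBl. Qed.

Lemma lincomb_mull n u c y : lincomb n (fun i => mul u (c i)) y = mul u (lincomb n c y).
Proof. by rewrite amul_sumr; apply: eq_bigr => i _; rewrite amulA. Qed.

Lemma lincomb_mulr n v c y : A v ->
  lincomb n (fun i => mul (c i) v) y = lincomb n c (mul v y).
Proof. by move=> hv; apply: eq_bigr => i _; rewrite r_mull // amulA. Qed.

Lemma A_identity0 n : A_identity n (fun=> 0).
Proof.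
by split=> [i _|y _]; [exact: (subspace0 A_subspace) | rewrite lincomb0].
Qed.

Lemma A_identityD n c c' : A_identity n c -> A_identity n c' ->
  A_identity n (fun i => c i + c' i).
Proof.
move=> [hc hcA] [hc' hcA']; split=> [i hi|y hy].
  exact: (subspaceD A_subspace (hc i hi) (hc' i hi)).
by rewrite lincombD hcA // hcA' // addr0.
Qed.

Lemma A_identityZ n k c : A_identity n c -> A_identity n (fun i => k *: c i).
Proof.
move=> [hc hcA]; split=> [i hi|y hy]; first exact: (subspaceZ k A_subspace (hc i hi)).
by rewrite lincombZ hcA // scaler0.
Qed.

Lemma A_identityB n c c' : A_identity n c -> A_identity n c' ->
  A_identity n (fun i => c i - c' i).
Proof.
move=> [hc hcA] [hc' hcA']; split=> [i hi|y hy].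
  exact: (subspaceB A_subspace (hc i hi) (hc' i hi)).
by rewrite lincombB hcA // hcA' // subrr.
Qed.

Lemma A_identity_mull n u c : A u -> A_identity n c ->
  A_identity n (fun i => mul u (c i)).
Proof.
move=> hu [hc hcA]; split=> [i hi|y hy]; first exact: (subalgebraM A_subalg hu (hc i hi)).
by rewrite lincomb_mull hcA // amul0r.
Qed.

Lemma A_identity_mulr n v c : A v -> A_identity n c ->
  A_identity n (fun i => mul (c i) v).
Proof.
move=> hv [hc hcA]; split=> [i hi|y hy]; first exact: (subalgebraM A_subalg (hc i hi) hv).
by rewrite lincomb_mulr // hcA //; apply: (subalgebraM A_subalg).
Qed.

Lemma A_identity_lead0 n c : A_identity n.+1 c -> c n = 0 -> A_identity n c.
Proof.
move=> [hc hcA] hcn; split=> [i hi|y hy]; first by apply: hc; apply: ltnW.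
by have := hcA y hy; rewrite lincombSr hcn amul0l addr0.
Qed.

Section Step.
Variables (n : nat) (x : V).
Hypothesis IHn : forall c, A_identity n c -> lincomb n c x = 0.

Definition lead_rel d z :=
  exists c, [/\ A_identity n.+1 c, c n = d & z = lincomb n.+1 c x].

Definition lead_ideal d := exists z, lead_rel d z.

Lemma lead_rel_functional d z z' : lead_rel d z -> lead_rel d z' -> z = z'.
Proof.
move=> [c [hc hcn ->]] [c' [hc' hc'n ->]]; apply/eqP; rewrite -subr_eq0; apply/eqP.
have lead0 : c n - c' n = 0 by rewrite hcn hc'n subrr.
rewrite -lincombB lincombSr lead0 amul0l addr0 IHn //.
exact: A_identity_lead0 (A_identityB hc hc') lead0.
Qed.

Lemma lead_relD d d' z z' : lead_rel d z -> lead_rel d' z' -> lead_rel (d + d') (z + z').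
Proof.
move=> [c [hc <- ->]] [c' [hc' <- ->]].
by exists (fun i => c i + c' i); rewrite lincombD; split=> //; apply: A_identityD.
Qed.

Lemma lead_relZ k d z : lead_rel d z -> lead_rel (k *: d) (k *: z).
Proof.
move=> [c [hc <- ->]].
by exists (fun i => k *: c i); rewrite lincombZ; split=> //; apply: A_identityZ.
Qed.

Lemma lead_rel_mull u d z : A u -> lead_rel d z -> lead_rel (mul u d) (mul u z).
Proof.
move=> hu [c [hc <- ->]].
by exists (fun i => mul u (c i)); rewrite lincomb_mull; split=> //; apply: A_identity_mull.
Qed.

Lemma lead_ideal_mulr v d : A v -> lead_ideal d -> lead_ideal (mul d v).
Proof.
move=> hv [_ [c [hc <- _]]]; exists (lincomb n.+1 (fun i => mul (c i) v) x).
by exists (fun i => mul (c i) v); split=> //; apply: A_identity_mulr.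
Qed.

Lemma lead_rel_mulr0 v d : A v -> A (mul v x) -> lead_ideal d -> lead_rel (mul d v) 0.
Proof.
move=> hv hvx [_ [c [hc <- _]]]; exists (fun i => mul (c i) v).
by split=> //; [apply: A_identity_mulr | rewrite lincomb_mulr //; case: hc => _ ->].
Qed.

Lemma ideal_lead : ideal_of mul A lead_ideal.
Proof.
split=> [d [_ [c [[hc _] <- _]]]|||].
- exact: hc.
- split=> [|d d' [z hz] [z' hz']|k d [z hz]].
  + by exists 0, (fun=> 0); split=> //; [exact: A_identity0 | rewrite lincomb0].
  + by exists (z + z'); apply: lead_relD.
  + by exists (k *: z); apply: lead_relZ.
- by move=> u d hu [z hz]; exists (mul u z); apply: lead_rel_mull.
- by move=> v d hv; apply: lead_ideal_mulr.
Qed.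

Lemma A_identity_extends_step c : A_identity n.+1 c -> lincomb n.+1 c x = 0.
Proof.
move=> hc.
have [f hf] : exists f, forall d, lead_ideal d -> lead_rel d (f d).
  by exists (fun d => epsilon (inhabits 0) (lead_rel d)) => d; apply: epsilon_spec.
have fE d z : lead_rel d z -> f d = z.
  by move=> hdz; apply: (lead_rel_functional _ hdz); apply: hf; exists z.
have fmod : left_module_map lead_ideal f.
  split=> [d d' hd hd'|k d hd|u d hu hd].
  - by rewrite (fE _ _ (lead_relD (hf d hd) (hf d' hd'))).
  - by rewrite (fE _ _ (lead_relZ k (hf d hd))).
  - by rewrite (fE _ _ (lead_rel_mull hu (hf d hd))).
have [w [hw hw0]] := ideal_map_rmul ideal_lead fmod.
have [J [dJ hJ]] := exists_dense_denominator x.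
have w0 : w = 0.
  apply: (dense_rann0 dJ) => s hs; have hsA := dense_sub dJ hs.
  apply: (dense_rann0 (dense_sumset_lann ideal_lead)) => _ [d [a [hd ha ->]]].
  rewrite amulDl !amulA -hw; last exact: lead_ideal_mulr.
  rewrite (fE _ _ (lead_rel_mulr0 hsA (hJ s hs) hd)) hw0 ?add0r //.
  exact: (idealMr (ideal_lann ideal_lead)).
have hcn : lead_rel (c n) (lincomb n.+1 c x) by exists c.
by rewrite -(fE _ _ hcn) hw ?w0 ?amul0r //; exists (lincomb n.+1 c x).
Qed.

End Step.

Lemma A_identity_extends n c : A_identity n c -> forall x, lincomb n c x = 0.
Proof.
elim: n c => [c _ x|n IHn c hc x]; first exact: big_ord0.
by apply: A_identity_extends_step hc => c' hc'; apply: IHn.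
Qed.

End LinearIdentity.

Lemma mul_nf_eval l s y : let t i := nth (None, Lendo id_is_lendo) s i in
  mul l (nf_eval s y) = lincomb (fun i => (t i).2) (size s) (fun i => mulo l (t i).1) y.
Proof.
by rewrite amul_sumr (big_nth (None, Lendo id_is_lendo)) big_mkord;
  apply: eq_bigr => i _; rewrite mul_lmulo.
Qed.

Lemma mult_op_eq0 Q mu : mult_op mul Q mu -> (forall a, A a -> mu a = 0) ->
  forall x, mu x = 0.
Proof.
move=> hmu muA x; have [s hs] := mult_op_nf hmu.
have [L [dL hL]] := dense_common_denominator (pmap id [seq t.1 | t <- s]).
apply: (dense_rann0 dL) => l hl; rewrite hs mul_nf_eval.
apply: A_identity_extends => [i v y _|]; first exact: lendo_mull.
split=> [i hi|y hy]; last by rewrite -mul_nf_eval -hs muA ?amul0r.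
rewrite /mulo; case e: (nth _ s i).1 => [q|]; last exact: dense_sub dL hl.
by apply: hL; rewrite // mem_pmap map_id -e -(nth_map _ None) // mem_nth ?size_map.
Qed.

End Subalgebra.
End MultiplicationAlgebra.

Theorem mainTheorem13 (Phi : comPzRingType) (Qmax : lmodType Phi)
  (mul : Qmax -> Qmax -> Qmax) (A Q : Qmax -> Prop) :
  assoc_alg mul ->
  subalgebra mul A ->
  semiprime mul A ->
  is_max_left_quotient mul A ->
  subalgebra mul Q ->
  (forall x, A x -> Q x) ->
  dense_extension mul A Q.
Proof.
move=> hmul hA hsp hmax _ _ mu hmu muA x _.
exact: (mult_op_eq0 hmul hA hsp hmax hmu muA x).
Qed.
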